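(* If $G$ is a nice connected graph of order $n$, maximum degree $\Delta$ and chromatic number $k$, then ${\rm ML}^{\rm W}(G) \leq 2k(n-1)+2\Delta$.
   Context: All graphs are finite and simple. A walk of a graph $G$ is a sequence of vertices $u_0u_1\dots u_p$ with $u_tu_{t+1}\in E(G)$ for all $t$ (vertices and edges may repeat); its length is $p$. For a walk $W$ of $G$, $G+W$ is the multigraph on $V(G)$ whose edge multiset consists of $E(G)$ together with each edge added as many times as $W$ traverses it. A multigraph is locally irregular if no two adjacent vertices have the same degree; a walk is irregularising if $G+W$ is locally irregular. A graph is nice if it is connected and not isomorphic to $K_2$. ${\rm ML}^{\rm W}(G)$ denotes the minimum length of an irregularising walk of $G$ (a walk of length $0$ is allowed). *)

From mathcomp Require Import all_boot.
Set Implicit Arguments. Unset Strict Implicit. Unset Printing Implicit Defensive.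

Section Graphs.
Variable T : finType.
Variable e : rel T.

Definition simple_graph : Prop := symmetric e /\ irreflexive e.

Definition deg (v : T) : nat := #|[set w | e v w]|.

Definition max_deg : nat := \max_(v : T) deg v.

Definition connected_graph : Prop := 0 < #|T| /\ forall x y : T, connect e x y.

Definition is_K2 : Prop := #|T| = 2 /\ (forall x y : T, x != y -> e x y).

Definition nice : Prop := connected_graph /\ ~ is_K2.

Definition proper_coloring (k : nat) (c : T -> 'I_k) : Prop :=
  forall x y, e x y -> c x != c y.

Definition colorable (k : nat) : Prop := exists c : T -> 'I_k, proper_coloring c.

Definition chromatic_number_is (k : nat) : Prop :=
  colorable k /\ forall j, colorable j -> k <= j.

(* A walk u_0 u_1 ... u_p is given by its start u0 and the list s = [u_1;...;u_p],
   subject to path e u0 s; its length is p = size s. *)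
Definition is_walk (u0 : T) (s : seq T) : bool := path e u0 s.

Definition walk_length (u0 : T) (s : seq T) : nat := size s.

Definition walk_steps (u0 : T) (s : seq T) : seq (T * T) := zip (u0 :: s) s.

(* multiplicity of the edge xy in the multigraph G + W *)
Definition mult (u0 : T) (s : seq T) (x y : T) : nat :=
  (e x y : nat) + count (fun st => (st == (x, y)) || (st == (y, x))) (walk_steps u0 s).

(* degree of v in G + W (no loops, as G+W has edges only between distinct vertices) *)
Definition deg_plus (u0 : T) (s : seq T) (v : T) : nat :=
  \sum_(w : T) mult u0 s v w.

Definition locally_irregular_plus (u0 : T) (s : seq T) : Prop :=
  forall x y : T, 0 < mult u0 s x y -> deg_plus u0 s x != deg_plus u0 s y.

Definition irregularising (u0 : T) (s : seq T) : Prop :=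
  is_walk u0 s /\ locally_irregular_plus u0 s.

Definition MLW_le (b : nat) : Prop :=
  exists (u0 : T) (s : seq T), irregularising u0 s /\ walk_length u0 s <= b.

End Graphs.

From mathcomp Require Import all_boot zify.
Set Implicit Arguments. Unset Strict Implicit. Unset Printing Implicit Defensive.

(* Fix a proper k-coloring c; it suffices to find a walk W such that
   floor(deg_{G+W}(v) / 2) = c(v) (mod k) for every vertex v, since then adjacent
   vertices get different degrees. Root a BFS spanning tree at y. A closed walk
   from y that runs back and forth m_v times along each tree edge (par v, v),
   with 1 <= m_v <= k, costs 2 sum m_v <= 2k(n-1) and adds m_v to the half-degree
   of both ends; choosing the m_v leaves first settles every vertex but the root.
   Since every tree edge joins an even layer to an odd one, the root is then
   settled exactly when a congruence between the two layers holds. It is reached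
   by shuttling mu times along an edge inside one parity class, with mu < k when
   k is odd; for even k this needs a parity condition, secured beforehand by a
   tail of at most two edges, and then mu <= k - 2. If no such edge exists the
   layers properly 2-color G, so k = 2 and only the parity condition matters. The
   extra cost is thus at most 2(k-1) <= 2 Delta, as k <= Delta + 1. *)

Lemma halfD_double m n : (m + n.*2)./2 = m./2 + n.
Proof. by rewrite halfD odd_double andbF doubleK. Qed.

Lemma eq_mod_sum (I : finType) (P : pred I) (F G : I -> nat) k :
  (forall i, P i -> F i = G i %[mod k]) ->
  \sum_(i | P i) F i = \sum_(i | P i) G i %[mod k].
Proof. by move=> FG; rewrite -modn_summ -[RHS]modn_summ (eq_bigr _ FG). Qed.

Lemma sum_indicator (T : finType) (P : pred T) (a : T) :
  \sum_(w | P w) ((a == w) : nat) = P a.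
Proof.
rewrite big_mkcond (bigD1 a) //= eqxx big1 ?addn0; first by case: (P a).
by move=> w /negbTE; rewrite eq_sym => ->; case: (P w).
Qed.

Lemma sum_half_add_indicator (T : finType) (F : T -> nat) (a : T) :
  \sum_v (F v + (a == v))./2 = \sum_v (F v)./2 + odd (F a).
Proof.
rewrite (bigD1 a) //= [in RHS](bigD1 a) //= eqxx addn1 -uphalfE uphalf_half.
rewrite (eq_bigr (fun v => (F v)./2)); first lia.
by move=> v /negbTE; rewrite eq_sym => ->; rewrite addn0.
Qed.

Lemma sum_half_add_step (T : finType) (F : T -> nat) (a b : T) : a != b ->
  \sum_v (F v + ((a == v) + (b == v)))./2 = \sum_v (F v)./2 + odd (F a) + odd (F b).
Proof.
move=> ab; under eq_bigr do rewrite addnA.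
rewrite (sum_half_add_indicator (fun v => F v + (a == v))) sum_half_add_indicator.
by rewrite (negbTE ab) addn0.
Qed.

Lemma exists_addn_mod k c t : 0 < k -> exists2 r, 0 < r <= k & c + r = t %[mod k].
Proof.
move=> k_gt0; pose r := (t + c * k.-1) %% k.
have cr : c + r = t %[mod k].
  rewrite modnDmr -(modnMDl c t).
  by rewrite -[in c * k](prednK k_gt0) mulnSr; congr (_ %% _); lia.
have [r0 | r_gt0] := posnP r.
  by exists k; rewrite ?k_gt0 ?leqnn // modnDr -cr r0 addn0.
by exists r => //; rewrite r_gt0 ltnW ?ltn_pmod.
Qed.

Lemma exists_double_addn_mod k a b : 0 < k -> odd k || ~~ odd (a + b) ->
  exists mu, a + mu.*2 = b %[mod k] /\ mu + ~~ odd k < k.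
Proof.
move=> k_gt0 parity; have [r _ ar] := exists_addn_mod a b k_gt0.
pose d := r %% k; have d_lt : d < k by rewrite ltn_pmod.
have ad : a + d = b %[mod k] by rewrite modnDmr.
case k_odd: (odd k).
  have half_k : ((k.+1)./2).*2 = k.+1 by rewrite -[RHS]odd_double_half /= k_odd.
  (* (k + 1) / 2 is the inverse of 2 modulo the odd number k *)
  exists ((d * (k.+1)./2) %% k); split; last by rewrite addn0 ltn_pmod.
  rewrite -ad -modnDmr -muln2 modnMml muln2 modnDmr doubleMr half_k.
  by rewrite -(modnMDl d (a + d)); congr (_ %% _); lia.
move: parity; rewrite k_odd /= => even_ab.
have d_even : ~~ odd d.
  have : odd (a + d) = odd b by rewrite -(odd_mod _ k_odd) ad odd_mod.
  by move: even_ab; rewrite !oddD; case: (odd a); case: (odd b); case: (odd d).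
have d_double : d = (d./2).*2 by rewrite -[LHS]odd_double_half (negbTE d_even).
have k_double : k = (k./2).*2 by rewrite -[LHS]odd_double_half k_odd.
by exists d./2; rewrite -d_double; split => //; lia.
Qed.

Fixpoint walk_deg (T : eqType) (x : T) (s : seq T) (v : T) : nat :=
  if s is a :: s' then (x == v) + (a == v) + walk_deg a s' v else 0.

Lemma walk_deg_cat (T : eqType) (x : T) s1 s2 v :
  walk_deg x (s1 ++ s2) v = walk_deg x s1 v + walk_deg (last x s1) s2 v.
Proof. by elim: s1 x => [|a s1 IH] x //=; rewrite IH !addnA. Qed.

Definition shuttle (T : Type) (a b : T) (m : nat) : seq T := flatten (nseq m [:: b; a]).

Lemma last_shuttle (T : Type) (a b : T) m : last a (shuttle a b m) = a.
Proof. by elim: m. Qed.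

Lemma size_shuttle (T : Type) (a b : T) m : size (shuttle a b m) = m.*2.
Proof. by elim: m => //= m IH; rewrite IH doubleS. Qed.

Lemma walk_deg_shuttle (T : eqType) (a b : T) m v :
  walk_deg a (shuttle a b m) v = (m * ((a == v) + (b == v))).*2.
Proof. by elim: m => //= m IH; rewrite IH; lia. Qed.

Lemma mem_shuttle (T : eqType) (a b : T) m : 0 < m -> b \in shuttle a b m.
Proof. by case: m => // m _; rewrite inE eqxx. Qed.

Section Walks.
Variables (T : finType) (e : rel T).
Hypotheses (esym : symmetric e) (eirr : irreflexive e).

Lemma degE v : deg e v = \sum_w (e v w : nat).
Proof.
rewrite /deg -sum1_card big_mkcond; apply: eq_bigr => w _.
by rewrite inE; case: (e v w).
Qed.

Lemma sum_step_indicator (a b v : T) : a != b ->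
  \sum_w (((a, b) == (v, w)) || ((a, b) == (w, v)) : nat) = (a == v) + (b == v).
Proof.
move=> ab; have split_step w : (((a, b) == (v, w)) || ((a, b) == (w, v)) : nat)
    = (a == v) * (b == w) + (b == v) * (a == w).
  rewrite !xpair_eqE; case: (a =P v) => [av|]; case: (b =P w) => [bw|];
    case: (a =P w) => [aw|]; case: (b =P v) => [bv|] //=; subst.
  by rewrite eqxx in ab.
rewrite (eq_bigr _ (fun w _ => split_step w)) big_split /= -!big_distrr /=.
by rewrite !(sum_indicator predT) !muln1.
Qed.

Lemma deg_plusE x s v : path e x s -> deg_plus e x s v = deg e v + walk_deg x s v.
Proof.
rewrite /deg_plus /mult big_split /= -degE => xs; congr (_ + _).
elim: s x xs => [|a s IH] x /=; first by rewrite /walk_steps big1.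
case/andP=> xa a_s; rewrite /walk_steps /=.
under eq_bigr do rewrite addnC.
rewrite big_split /= IH // sum_step_indicator 1?addnC //.
by apply: contraTneq xa => ->; rewrite eirr.
Qed.

Lemma walk_steps_edge x s st : path e x s -> st \in walk_steps x s -> e st.1 st.2.
Proof.
elim: s x => [|a s IH] x //= /andP [xa a_s].
by rewrite /walk_steps /= inE => /orP [/eqP -> // | ]; apply: IH.
Qed.

Lemma mult_gt0_edge x s a b : path e x s -> 0 < mult e x s a b -> e a b.
Proof.
move=> xs; rewrite /mult; case ab: (e a b) => //=.
rewrite add0n -has_count => /hasP [st /(walk_steps_edge xs) + /orP [] /eqP st_ab].
  by rewrite st_ab /= ab.
by rewrite st_ab /= esym ab.
Qed.

Lemma path_shuttle a b m : e a b -> path e a (shuttle a b m).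
Proof. by move=> ab; elim: m => //= m ->; rewrite ab esym ab. Qed.

Lemma splice_shuttle x s a b m : path e x s -> a \in x :: s -> e a b ->
  exists s', [/\ path e x s', last x s' = last x s, size s' = size s + m.*2,
    {subset x :: s ++ shuttle a b m <= x :: s'} &
    forall v, walk_deg x s' v = walk_deg x s v + (m * ((a == v) + (b == v))).*2].
Proof.
move=> + a_s ab; case/splitPl: a_s => s1 s2 s1_last.
rewrite cat_path s1_last => /andP [x_s1 a_s2].
exists (s1 ++ shuttle a b m ++ s2); split.
- by rewrite !cat_path s1_last last_shuttle x_s1 path_shuttle.
- by rewrite !last_cat s1_last last_shuttle.
- by rewrite !size_cat size_shuttle; lia.
- move=> v; rewrite !(inE, mem_cat).
  by case/orP=> [-> | /orP [/orP [] | ] ->]; rewrite ?orbT.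
- by move=> v; rewrite !walk_deg_cat s1_last last_shuttle walk_deg_shuttle; lia.
Qed.

Lemma exists_parity_flip (F : T -> nat) a1 a2 a3 : e a2 a1 -> e a2 a3 -> a1 != a3 ->
  exists y ts, [/\ path e y ts, size ts <= 2 &
    odd (\sum_v (F v + walk_deg y ts v)./2) = ~~ odd (\sum_v (F v)./2)].
Proof.
move=> e21 e23 a13.
have a21 : a2 != a1 by apply: contraTneq e21 => ->; rewrite eirr.
have a23 : a2 != a3 by apply: contraTneq e23 => ->; rewrite eirr.
have one_step a b : a != b ->
    \sum_v (F v + walk_deg a [:: b] v)./2 = \sum_v (F v)./2 + odd (F a) + odd (F b).
  by move=> ab; rewrite -sum_half_add_step //; apply: eq_bigr => v _ /=; rewrite addn0.
have [p12 | p12] := eqVneq (odd (F a1)) (odd (F a2)); last first.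
  exists a1, [:: a2]; split => //; first by rewrite /= esym e21.
  rewrite one_step 1?eq_sym // !oddD; move: p12.
  by case: (odd (F a1)); case: (odd (F a2)); case: (odd _).
have [p23 | p23] := eqVneq (odd (F a2)) (odd (F a3)); last first.
  exists a2, [:: a3]; split => //; first by rewrite /= e23.
  rewrite one_step // !oddD; move: p23.
  by case: (odd (F a2)); case: (odd (F a3)); case: (odd _).
(* all three parities agree: along a1 a2 a3 the vertex a2 gains 2, so the sum
   grows by odd (F a1) + 1 + odd (F a3) *)
exists a1, [:: a2; a3]; split => //; first by rewrite /= esym e21 e23.
rewrite /=; under eq_bigr do rewrite addn0 addnA.
have a12 : a1 != a2 by rewrite eq_sym.
rewrite (sum_half_add_step (fun v => F v + ((a1 == v) + (a2 == v))) a23).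
rewrite sum_half_add_step // eqxx (negbTE a12) (negbTE a13) (negbTE a23).
by rewrite !oddD -p23 -p12; case: (odd (F a1)); case: (odd _).
Qed.

Lemma irregularising_of_coloring k (c : T -> 'I_k) x s :
  proper_coloring e c -> path e x s ->
  (forall v, (deg_plus e x s v)./2 = c v %[mod k]) -> irregularising e x s.
Proof.
move=> c_proper xs col; split => // a b /(mult_gt0_edge xs) ab.
apply: contra (c_proper a b ab) => /eqP deg_ab; apply/eqP/val_inj.
by rewrite /= -(modn_small (ltn_ord (c a))) -(modn_small (ltn_ord (c b))) -!col deg_ab.
Qed.

End Walks.

Section Balance.
Variables (T : finType) (e : rel T).

(* The congruence forced by a tree: if h + t = g (mod k) at every vertex and t has
   the same sum on both sides, as tree loads do for the depth parity, then h and g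
   are balanced.  Conversely, balance yields the congruence at the one vertex where
   it was not imposed. *)
Definition balanced k (side : pred T) (h g : T -> nat) : Prop :=
  \sum_(v | ~~ side v) h v + \sum_(v | side v) g v =
  \sum_(v | side v) h v + \sum_(v | ~~ side v) g v %[mod k].

Lemma balanced_root_congr k side (h g t : T -> nat) r :
  ~~ side r -> \sum_(v | ~~ side v) t v = \sum_(v | side v) t v ->
  balanced k side h g -> (forall v, v != r -> h v + t v = g v %[mod k]) ->
  h r + t r = g r %[mod k].
Proof.
move=> r_side t_bal bal congr_t.
have side_congr : \sum_(v | side v) (h v + t v) = \sum_(v | side v) g v %[mod k].
  by apply: eq_mod_sum => v v_side; apply: congr_t; apply: contraTneq v_side => ->.
have other_congr : \sum_(v | ~~ side v) (h v + t v) = \sum_(v | ~~ side v) g v %[mod k].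
  apply/eqP; rewrite -(eqn_modDr (\sum_(v | side v) g v)); apply/eqP.
  have -> : \sum_(v | ~~ side v) (h v + t v) + \sum_(v | side v) g v =
      \sum_(v | ~~ side v) h v + \sum_(v | side v) g v + \sum_(v | side v) t v.
    by rewrite big_split /= t_bal addnAC.
  rewrite -modnDml bal modnDml.
  have -> : \sum_(v | side v) h v + \sum_(v | ~~ side v) g v + \sum_(v | side v) t v =
      \sum_(v | side v) (h v + t v) + \sum_(v | ~~ side v) g v.
    by rewrite big_split /= addnAC.
  by rewrite -modnDml side_congr modnDml addnC.
move: other_congr; rewrite (bigD1 r) // [\sum_(v | ~~ side v) g v](bigD1 r) //= -modnDmr.
rewrite (eq_mod_sum (G := g)) => [|v /andP [_ /congr_t] //].
by rewrite modnDmr => /eqP; rewrite eqn_modDr => /eqP.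
Qed.

Lemma sum_add_shuttle_weight (P : pred T) (h : T -> nat) mu x z :
  \sum_(v | P v) (h v + mu * ((x == v) + (z == v))) = \sum_(v | P v) h v + mu * (P x + P z).
Proof. by rewrite big_split /= -big_distrr big_split /= !sum_indicator. Qed.

Lemma exists_balancing_shuttle k (side : pred T) (h g : T -> nat) x0 z0 :
  1 < k -> e x0 z0 -> ((forall x z, e x z -> side x != side z) -> k <= 2) ->
  odd k || ~~ odd (\sum_v h v + \sum_v g v) ->
  exists x z mu, [/\ e x z, mu + ~~ odd k < k &
    balanced k side (fun v => h v + mu * ((x == v) + (z == v))) g].
Proof.
move=> k_gt1 xz0 bipartite parity; rewrite /balanced.
set P := \sum_(v | ~~ side v) h v + \sum_(v | side v) g v.
set Q := \sum_(v | side v) h v + \sum_(v | ~~ side v) g v.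
have PQ : P + Q = \sum_v h v + \sum_v g v.
  by rewrite [\sum_v h v](bigID side) [\sum_v g v](bigID side) /=; lia.
have [|] := boolP [exists x, exists z, e x z && (side x == side z)]; last first.
  move/existsPn=> no_same; have k2 : k = 2.
    apply/eqP; rewrite eqn_leq k_gt1 andbT; apply: bipartite => x z xz.
    by move/existsPn: (no_same x) => /(_ z); rewrite xz.
  exists x0, z0, 0; rewrite !sum_add_shuttle_weight !mul0n !addn0 -/P -/Q k2; split => //.
  by move: parity; rewrite k2 -PQ !modn2 oddD; case: (odd P); case: (odd Q).
move=> /existsP [x /existsP [z /andP [xz /eqP same]]].
have [|mu [mu_congr mu_lt]] := exists_double_addn_mod
  (a := if side x then Q else P) (b := if side x then P else Q) (ltnW k_gt1).
  by case: (side x); rewrite ?PQ // addnC PQ.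
exists x, z, mu; split => //.
rewrite !sum_add_shuttle_weight -same; case: (side x) mu_congr => /= mu_congr.
  by rewrite -[0 + 0]/0 muln0 addn0 -/P addnAC -/Q -[1 + 1]/2 muln2 mu_congr.
by rewrite -[0 + 0]/0 muln0 addn0 -/Q addnAC -/P -[1 + 1]/2 muln2 mu_congr.
Qed.

End Balance.

Section SpanningTree.
Variables (T : finType) (e : rel T) (y : T).
Hypothesis y_conn : forall v, connect e y v.

Definition reachable_in n v := [exists p : n.-tuple T, path e y p && (last y p == v)].

Lemma reachable_in_path p : path e y p -> reachable_in (size p) (last y p).
Proof. by move=> yp; apply/existsP; exists (in_tuple p); rewrite yp eqxx. Qed.

Lemma reachable_in_edge n u v : reachable_in n u -> e u v -> reachable_in n.+1 v.
Proof.
move=> /existsP [p /andP [yp /eqP pu]] uv; apply/existsP; exists [tuple of rcons p v].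
by rewrite rcons_path yp pu uv last_rcons eqxx.
Qed.

Lemma reachable_in_exists v : exists n, reachable_in n v.
Proof. by have /connectP [p yp ->] := y_conn v; exists (size p); apply: reachable_in_path. Qed.

Definition dist v := ex_minn (reachable_in_exists v).

Lemma reachable_in_dist v : reachable_in (dist v) v.
Proof. by rewrite /dist; case: ex_minnP. Qed.

Lemma dist_min n v : reachable_in n v -> dist v <= n.
Proof. by rewrite /dist; case: ex_minnP => m _; apply. Qed.

Lemma dist_root : dist y = 0.
Proof. by apply/eqP; rewrite -leqn0; apply: dist_min (reachable_in_path (p := [::]) _). Qed.

Lemma dist_parent v : v != y -> exists2 u, e u v & (dist u).+1 = dist v.
Proof.
move=> vy; have /existsP [p /andP [yp /eqP pv]] := reachable_in_dist v.
move: (size_tuple p) yp pv; case/lastP: (tval p) => [_ _ yv | q u].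
  by rewrite -yv eqxx in vy.
rewrite size_rcons rcons_path last_rcons => q_size /andP [yq qu] uv; subst u.
exists (last y q) => //.
have := dist_min (reachable_in_path yq).
have := dist_min (reachable_in_edge (reachable_in_dist (last y q)) qu).
lia.
Qed.

Lemma exists_spanning_tree : exists (par : T -> T) (depth : T -> nat),
  depth y = 0 /\ forall v, v != y -> e (par v) v /\ (depth (par v)).+1 = depth v.
Proof.
exists (fun v => odflt y [pick u | e u v && ((dist u).+1 == dist v)]), dist.
split => [|v vy]; first exact: dist_root.
case: pickP => [u /andP [uv /eqP] // | none].
by have [u uv du] := dist_parent vy; move: (none u); rewrite uv du eqxx.
Qed.

End SpanningTree.

Section RootedTree.
Variables (T : finType) (e : rel T) (y : T) (par : T -> T) (depth : T -> nat).
Hypothesis esym : symmetric e.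
Hypothesis depth_root : depth y = 0.
Hypothesis par_edge : forall v, v != y -> e (par v) v.
Hypothesis depth_par : forall v, v != y -> (depth (par v)).+1 = depth v.

Lemma depth_par_lt v : v != y -> depth (par v) < depth v.
Proof. by move/depth_par <-. Qed.

Lemma par_neq v : v != y -> (par v == v) = false.
Proof. by move/depth_par_lt; apply: contraTF => /eqP ->; rewrite ltnn. Qed.

Definition tree_load (m : T -> nat) (w : T) : nat :=
  \sum_(v | v != y) m v * ((par v == w) + (v == w)).

Lemma sum_tree_load (P : pred T) m :
  \sum_(w | P w) tree_load m w = \sum_(v | v != y) m v * (P (par v) + P v).
Proof.
rewrite /tree_load exchange_big /=; apply: eq_bigr => v _.
by rewrite -big_distrr big_split /= !sum_indicator.
Qed.

Lemma tree_load_balance m :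
  \sum_(w | ~~ odd (depth w)) tree_load m w = \sum_(w | odd (depth w)) tree_load m w.
Proof.
rewrite !sum_tree_load; apply: eq_bigr => v vy.
by rewrite -(depth_par vy) /=; case: (odd (depth (par v))).
Qed.

Lemma tree_loadE m w : w != y ->
  tree_load m w = m w + \sum_(v | (v != y) && (par v == w)) m v.
Proof.
move=> wy; rewrite /tree_load (bigD1 w) //= par_neq // eqxx muln1; congr (_ + _).
rewrite big_mkcond [RHS]big_mkcond; apply: eq_bigr => v _.
have [-> | vw] := eqVneq v w; first by rewrite par_neq // andbF.
by rewrite /= andbT addn0; case: (v != y); case: (par v == w); rewrite ?muln0 ?muln1.
Qed.

Lemma exists_tree_walk_on m (S : {set T}) : (forall v, v != y -> 0 < m v) ->
  y \in S -> (forall v, v \in S -> v != y -> par v \in S) ->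
  exists s, [/\ path e y s, last y s = y, {subset S <= y :: s},
    size s = (\sum_(v in S | v != y) m v).*2 &
    forall w, walk_deg y s w = (\sum_(v in S | v != y) m v * ((par v == w) + (v == w))).*2].
Proof.
move=> m_gt0; move: {2}#|S| (leqnn #|S|) => N; elim: N S => [|N IH] S S_size yS S_closed.
  by move: S_size; rewrite leqn0 => /eqP /cards0_eq S0; rewrite S0 inE in yS.
have [S_root | [v0 v0S]] := set_0Vmem (S :\ y).
  have no_other v : (v \in S) && (v != y) = false by rewrite andbC -in_setD1 S_root inE.
  exists [::]; split => // [v vS | | w]; rewrite ?big_pred0 //.
  by rewrite inE; apply: contraFT (no_other v) => vy; rewrite vS.
pose u := [arg max_(v > v0 in S :\ y) depth v].
have [u_in u_max] : u \in S :\ y /\ forall v, v \in S :\ y -> depth v <= depth u.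
  by rewrite /u; case: arg_maxnP.
move: (u_in); rewrite in_setD1 => /andP [uy uS].
have par_u_ne v : v \in S -> v != y -> par v != u.
  move=> vS vy; apply: contraTneq (depth_par_lt vy) => ->; rewrite -leqNgt.
  by apply: u_max; rewrite in_setD1 vy.
have [|||s [ys s_last s_cover s_size s_deg]] := IH (S :\ u).
- by move: S_size; rewrite (cardsD1 u S) uS.
- by rewrite in_setD1 eq_sym uy.
- move=> v; rewrite in_setD1 => /andP [_ vS] vy.
  by rewrite in_setD1 par_u_ne ?S_closed.
have par_u_in : par u \in y :: s.
  by apply: s_cover; rewrite in_setD1 par_neq ?S_closed.
have [s' [ys' s'_last s'_size s'_cover s'_deg]] := splice_shuttle esym (m u) ys par_u_in (par_edge uy).
have split_u (F : T -> nat) :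
    \sum_(v in S | v != y) F v = F u + \sum_(v in S :\ u | v != y) F v.
  rewrite (bigD1 u) /= ?uS //; congr (_ + _); apply: eq_bigl => v.
  by rewrite in_setD1 andbC andbA.
exists s'; split => //.
- by rewrite s'_last.
- move=> v vS; apply: s'_cover; rewrite -cat_cons mem_cat; apply/orP.
  have [-> | vu] := eqVneq v u; first by right; rewrite mem_shuttle ?m_gt0.
  by left; apply: s_cover; rewrite in_setD1 vu.
- by rewrite s'_size s_size split_u doubleD addnC.
- by move=> w; rewrite s'_deg s_deg split_u doubleD addnC.
Qed.

Lemma exists_tree_walk m : (forall v, v != y -> 0 < m v) ->
  exists s, [/\ path e y s, last y s = y, forall v, v \in y :: s,
    size s = (\sum_(v | v != y) m v).*2 &
    forall w, walk_deg y s w = (tree_load m w).*2].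
Proof.
move=> m_gt0.
have [//|//|s [ys s_last s_cover s_size s_deg]] := exists_tree_walk_on (S := [set: T]) m_gt0.
exists s; split => // [v | | w]; first exact: s_cover.
  by rewrite s_size; congr _.*2; apply: eq_bigl => v; rewrite in_setT.
by rewrite s_deg; congr _.*2; apply: eq_bigl => v; rewrite in_setT.
Qed.

(* S holds the vertices whose parent edge is not yet weighted; it is closed under
   children, so the weight of its shallowest vertex can be chosen last. *)
Lemma exists_tree_weights_on k (h g : T -> nat) (S : {set T}) : 0 < k ->
  y \notin S -> (forall v, v != y -> par v \in S -> v \in S) ->
  exists m, (forall v, v \in S -> 0 < m v <= k) /\
    (forall v, v \in S -> h v + tree_load m v = g v %[mod k]).
Proof.
move=> k_gt0; move: {2}#|S| (leqnn #|S|) => N; elim: N S => [|N IH] S S_size yS S_closed.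
  by exists (fun=> 1); move: S_size; rewrite leqn0 => /eqP /cards0_eq ->; split=> v; rewrite inE.
have [-> | [v0 v0S]] := set_0Vmem S; first by exists (fun=> 1); split=> v; rewrite inE.
pose u := [arg min_(v < v0 in S) depth v].
have [uS u_min] : u \in S /\ forall v, v \in S -> depth u <= depth v.
  by rewrite /u; case: arg_minnP.
have uy : u != y by apply: contraNneq yS => <-.
have [|||m' [m'_bound m'_congr]] := IH (S :\ u).
- by move: S_size; rewrite (cardsD1 u S) uS.
- by rewrite in_setD1 negb_and yS orbT.
- move=> v vy; rewrite !in_setD1 => /andP [_ pvS]; rewrite S_closed // andbT.
  by apply: contraTneq (depth_par_lt vy) => vu; subst v; rewrite -leqNgt u_min.
have [r r_bound r_congr] :=
  exists_addn_mod (h u + \sum_(v | (v != y) && (par v == u)) m' v) (g u) k_gt0.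
pose m v := if v == u then r else m' v.
have children_m w : w \in S ->
    \sum_(v | (v != y) && (par v == w)) m v = \sum_(v | (v != y) && (par v == w)) m' v.
  move=> wS; apply: eq_bigr => v /andP [vy /eqP pv]; rewrite /m.
  have [vu | //] := eqVneq v u; move: (depth_par_lt vy); rewrite pv vu.
  by rewrite ltnNge u_min.
exists m; split=> v vS.
  by rewrite /m; have [// | vu] := eqVneq v u; apply: m'_bound; rewrite in_setD1 vu.
have vy : v != y by apply: contraNneq yS => <-.
rewrite tree_loadE // children_m // /m; have [-> | vu] := eqVneq v u.
  by rewrite -r_congr addnAC addnA.
by rewrite -(tree_loadE m') // m'_congr // in_setD1 vu.
Qed.

Lemma exists_tree_weights k (h g : T -> nat) : 0 < k ->
  exists m, (forall v, v != y -> 0 < m v <= k) /\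
    (forall v, v != y -> h v + tree_load m v = g v %[mod k]).
Proof.
move=> k_gt0; have [||m [m_bound m_congr]] := exists_tree_weights_on h g (S := [set~ y]) k_gt0.
- by rewrite !inE eqxx.
- by move=> v vy _; rewrite in_setC1.
by exists m; split=> v vy; [apply: m_bound | apply: m_congr]; rewrite in_setC1.
Qed.

Lemma exists_correcting_walk k (h g : T -> nat) : 0 < k ->
  balanced k (fun v => odd (depth v)) h g ->
  exists s, [/\ path e y s, last y s = y, forall v, v \in y :: s,
    size s <= (k * #|T|.-1).*2 &
    forall v, exists2 t, walk_deg y s v = t.*2 & h v + t = g v %[mod k]].
Proof.
move=> k_gt0 bal.
have [m [m_bound m_congr]] := exists_tree_weights h g k_gt0.
have [|s [ys s_last s_cover s_size s_deg]] := exists_tree_walk (m := m).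
  by move=> v /m_bound /andP [].
exists s; split=> // [|v].
  rewrite s_size leq_double mulnC -(cardC1 y) -sum_nat_const.
  by apply: leq_sum => v /m_bound /andP [].
exists (tree_load m v) => //.
have [-> | vy] := eqVneq v y; last exact: m_congr.
apply: balanced_root_congr bal m_congr; first by rewrite depth_root.
exact: tree_load_balance.
Qed.

End RootedTree.

Section Colorings.
Variables (T : finType) (e : rel T).
Hypotheses (esym : symmetric e) (eirr : irreflexive e).

Lemma deg_le_max_deg v : deg e v <= max_deg e.
Proof. exact: (leq_bigmax v). Qed.

Lemma colorable_max_deg : colorable e (max_deg e).+1.
Proof.
suff [c c_proper] : exists c : T -> 'I_(max_deg e).+1,
    {in enum T &, forall a b, e a b -> c a != c b}.
  by exists c => a b; apply: c_proper; rewrite mem_enum.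
elim: (enum T) => [|v s [c c_proper]]; first by exists (fun=> ord0).
have /subsetPn [col _ col_free] :
    ~~ ([set: 'I_(max_deg e).+1] \subset c @: [set w | e v w]).
  apply/negP => /subset_leq_card; rewrite cardsT card_ord leqNgt ltnS => /negP; apply.
  exact: leq_trans (leq_imset_card _ _) (deg_le_max_deg v).
exists (fun w => if w == v then col else c w) => a b; rewrite !inE.
have [-> _ | av /= a_s] := eqVneq a v.
  have [-> _ | bv /= _ vb] := eqVneq b v; first by rewrite eirr.
  by apply: contraNneq col_free => ->; apply: imset_f; rewrite inE.
have [-> _ av' | bv /= b_s] := eqVneq b v.
  by rewrite eq_sym; apply: contraNneq col_free => ->; apply: imset_f; rewrite inE esym.
exact: c_proper.
Qed.

Lemma colorable_two_of_side (side : pred T) :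
  (forall x z, e x z -> side x != side z) -> colorable e 2.
Proof.
move=> side_proper; exists (fun v => if side v then ord_max else ord0) => x z /side_proper.
by case: (side x); case: (side z).
Qed.

Lemma proper_coloring_gt1 k (c : T -> 'I_k) x z : proper_coloring e c -> e x z -> 1 < k.
Proof.
move=> c_proper /c_proper; case: k c {c_proper} => [|[|k]] c //; first by case: (c x).
by rewrite !ord1.
Qed.

Lemma nice_path3 x z : nice e -> e x z ->
  exists a1 a2 a3, [/\ e a2 a1, e a2 a3 & a1 != a3].
Proof.
move=> [[_ conn] not_K2] xz.
have [/existsP [a2 /existsP [a1 /existsP [a3 /and3P [? ? ?]]]] | no_P3] :=
  boolP [exists a2, exists a1, exists a3, [&& e a2 a1, e a2 a3 & a1 != a3]].
  by exists a1, a2, a3.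
exfalso; apply: not_K2.
have nbr_uniq u a b : e u a -> e u b -> a = b.
  move=> ua ub; apply/eqP; apply: contraNT no_P3 => ab.
  by apply/existsP; exists u; apply/existsP; exists a; apply/existsP; exists b; rewrite ua ub ab.
have zx : e z x by rewrite esym.
pose A := [set x; z].
have A_out u w : e u w -> u \in A -> w \in A.
  move=> uw; rewrite !inE => /orP [] /eqP u_eq; subst u.
    by rewrite (nbr_uniq _ _ _ uw xz) eqxx orbT.
  by rewrite (nbr_uniq _ _ _ uw zx) eqxx.
have A_closed : closed e A.
  by move=> u w uw; apply/idP/idP; apply: A_out; rewrite // esym.
have all_A v : v \in A by rewrite -(closed_connect A_closed (conn x v)) !inE eqxx.
have xz_ne : x != z by apply: contraTneq xz => ->; rewrite eirr.
split.
  have -> : #|T| = #|A|.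
    by apply/eqP; rewrite eqn_leq max_card andbT; apply/subset_leq_card/subsetP => v _.
  by rewrite cards2 xz_ne.
move=> a b; have := all_A a; have := all_A b; rewrite !inE.
by case/orP => /eqP -> /orP [] /eqP ->; rewrite ?eqxx.
Qed.

End Colorings.

Lemma MLW_le_edgeless (T : finType) (e : rel T) b :
  0 < #|T| -> (forall x z, ~~ e x z) -> MLW_le e b.
Proof.
case/card_gt0P => u0 _ no_edge; exists u0, [::]; split=> //; split=> // x z.
by rewrite /mult /= (negbTE (no_edge x z)).
Qed.

Section Construction.
Variables (T : finType) (e : rel T) (k : nat) (c : T -> 'I_k).
Hypotheses (esym : symmetric e) (eirr : irreflexive e).
Hypothesis conn : forall x y, connect e x y.
Hypothesis c_proper : proper_coloring e c.
Hypothesis k_le : k <= (max_deg e).+1.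
Hypothesis k_bipartite : colorable e 2 -> k <= 2.

Lemma exists_parity_tail a1 a2 a3 : e a2 a1 -> e a2 a3 -> a1 != a3 ->
  exists y ts, [/\ path e y ts, size ts <= (~~ odd k).*2 &
    odd k || ~~ odd (\sum_v (deg e v + walk_deg y ts v)./2 + \sum_v (c v : nat))].
Proof.
move=> e21 e23 a13.
have [parity_ok | ] := boolP (odd k || ~~ odd (\sum_v (deg e v)./2 + \sum_v (c v : nat))).
  by exists a1, [::]; split=> //; under eq_bigr do rewrite /= addn0.
rewrite negb_or negbK => /andP [k_even odd_sum].
have [y [ts [yts ts_size flip]]] := exists_parity_flip esym eirr (deg e) e21 e23 a13.
exists y, ts; rewrite (negbTE k_even); split=> //=.
by move: odd_sum; rewrite !oddD flip; case: (odd _); case: (odd _).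
Qed.

Lemma exists_coloring_walk a1 a2 a3 : e a2 a1 -> e a2 a3 -> a1 != a3 ->
  exists y s, [/\ path e y s, size s <= (k * #|T|.-1).*2 + (max_deg e).*2 &
    forall v, (deg_plus e y s v)./2 = c v %[mod k]].
Proof.
move=> e21 e23 a13.
have k_gt1 := proper_coloring_gt1 c_proper e21.
have [y [ts [yts ts_size ts_parity]]] := exists_parity_tail e21 e23 a13.
have [par [depth [depth_root tree]]] := exists_spanning_tree (conn y).
pose h0 v := (deg e v + walk_deg y ts v)./2.
have [||x [z [mu [xz mu_lt bal]]]] := exists_balancing_shuttle
  (side := fun v => odd (depth v)) (h := h0) (g := fun v => c v : nat) k_gt1 e21.
- by move=> /colorable_two_of_side /k_bipartite.
- exact: ts_parity.
have [s [ys s_last s_cover s_size s_deg]] := exists_correcting_walk esym depth_root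
  (fun v vy => (tree v vy).1) (fun v vy => (tree v vy).2) (ltnW k_gt1) bal.
have [s' [ys' s'_last s'_size _ s'_deg]] := splice_shuttle esym mu ys (s_cover x) xz.
have ys'ts : path e y (s' ++ ts) by rewrite cat_path ys' s'_last s_last.
exists y, (s' ++ ts); split=> // [|v].
  by rewrite size_cat s'_size; lia.
have [t s_t t_congr] := s_deg v.
rewrite deg_plusE // walk_deg_cat s'_last s_last s'_deg s_t.
have -> : deg e v + (t.*2 + (mu * ((x == v) + (z == v))).*2 + walk_deg y ts v) =
    deg e v + walk_deg y ts v + (mu * ((x == v) + (z == v)) + t).*2 by rewrite doubleD; lia.
by rewrite halfD_double addnA.
Qed.

End Construction.

Theorem corollary4p6 (T : finType) (e : rel T) (k : nat) :
  simple_graph e -> nice e -> chromatic_number_is e k ->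
  MLW_le e (2 * k * (#|T| - 1) + 2 * max_deg e).
Proof.
move=> [esym eirr] nice_e [[c c_proper] c_min].
have [[x z] /= xz | no_edge] := pickP (fun p : T * T => e p.1 p.2); last first.
  by apply: (MLW_le_edgeless _ nice_e.1.1) => x z; rewrite (no_edge (x, z)).
have [a1 [a2 [a3 [e21 e23 a13]]]] := nice_path3 esym eirr nice_e xz.
have [y [s [ys s_size s_col]]] := exists_coloring_walk esym eirr nice_e.1.2 c_proper
  (c_min _ (colorable_max_deg esym eirr)) (c_min 2) e21 e23 a13.
exists y, s; split; first exact: irregularising_of_coloring c_proper ys s_col.
by rewrite /walk_length subn1 -mulnA !mul2n.
Qed.
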